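(* Let $n>p=p_n$ and $r_n=(-\log(1-\frac pn))^{1/2}$. Assume $p/n\to y\in(0,1]$ and $t=t_n=O(1/r_n)$ as $n\to\infty$ ($t_n$ real). Then $$\log\Big[\frac{\Gamma(\frac n2+t)}{\Gamma(\frac n2)}\cdot\frac{\Gamma(\frac{n-p}2)}{\Gamma(\frac{n-p}2+t)}\Big]=r_n^2t+o(1)$$ as $n\to\infty$.
   Context: $\Gamma$ is the Gamma function. *)

From Stdlib Require Import Reals.
From Coquelicot Require Import Coquelicot.
Open Scope R_scope.

Definition Gamma (x : R) : R :=
  RInt_gen (fun s => Rpower s (x - 1) * exp (- s))
           (at_right 0) (Rbar_locally p_infty).

Definition r_seq (p : nat -> nat) (n : nat) : R :=
  sqrt (- ln (1 - INR (p n) / INR n)).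

From Stdlib Require Import Reals Lra Lia Classical.
From Coquelicot Require Import Coquelicot.
Open Scope R_scope.

(* With lnGamma_rem A t := log Γ(A + t) - log Γ(A) - t log A and
   log(n/2) - log((n-p)/2) = r_n^2, the quantity in question is
   lnGamma_rem (n/2) t - lnGamma_rem ((n-p)/2) t.
   Γ is the supremum of the integrals of its integrand over compact subintervals of (0, ∞); from
   this, Hölder's inequality makes log Γ convex and integration by parts gives Γ(x+1) = x Γ(x).
   Convexity traps the secants of log Γ between the unit secants, which are values of log,
   so |lnGamma_rem A t| <= |t| (4|t| + 5) / A whenever |t| <= A/2.
   It remains that t_n is bounded and t_n / (n - p) -> 0; the latter because
   r_n^2 (n-p)^2 >= min(log n / 2, p), which tends to infinity when p/n -> y > 0. *)

Lemma exp_le_compat a b : a <= b -> exp a <= exp b.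
Proof. intros [h|h]; [apply Rlt_le, exp_increasing, h | rewrite h; apply Rle_refl]. Qed.

Lemma ln_le_sub1 u : 0 < u -> ln u <= u - 1.
Proof.
  intros hu. rewrite <- (exp_ln u) at 2 by exact hu.
  pose proof (exp_ineq1_le (ln u)). lra.
Qed.

Lemma ln_sub_le a b : 0 < a -> 0 < b -> ln b - ln a <= (b - a) / a.
Proof.
  intros ha hb. rewrite <- ln_div by assumption.
  eapply Rle_trans; [apply ln_le_sub1, Rdiv_lt_0_compat; assumption|].
  right; field; lra.
Qed.

Lemma ln_sub_ge a b : 0 < a -> 0 < b -> (b - a) / b <= ln b - ln a.
Proof.
  intros ha hb. pose proof (ln_le_sub1 (a / b) (Rdiv_lt_0_compat _ _ ha hb)) as h.
  rewrite ln_div in h by assumption.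
  replace ((b - a) / b) with (1 - a / b) by (field; lra). lra.
Qed.

Lemma Rdiv_le_cross a b c d : 0 < b -> 0 < d -> a * d <= c * b -> a / b <= c / d.
Proof.
  intros hb hd h.
  replace (a / b) with ((a * d) * / (b * d)) by (field; lra).
  replace (c / d) with ((c * b) * / (b * d)) by (field; lra).
  apply Rmult_le_compat_r; [|exact h].
  apply Rlt_le, Rinv_0_lt_compat, Rmult_lt_0_compat; assumption.
Qed.

Lemma weighted_am_gm u v l : 0 < u -> 0 < v -> 0 < l < 1 ->
  Rpower u l * Rpower v (1 - l) <= l * u + (1 - l) * v.
Proof.
  intros hu hv hl. set (w := l * u + (1 - l) * v).
  assert (hw : 0 < w).
  { unfold w. pose proof (Rmult_lt_0_compat l u ltac:(lra) hu).
    pose proof (Rmult_lt_0_compat (1 - l) v ltac:(lra) hv). lra. }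
  (* concavity of ln: the two tangent-line bounds at w average to ln w *)
  pose proof (ln_sub_le w u hw hu). pose proof (ln_sub_le w v hw hv).
  assert (l * ((u - w) / w) + (1 - l) * ((v - w) / w) = 0) by (unfold w in *; field; lra).
  unfold Rpower. rewrite <- exp_plus, <- (exp_ln w) by exact hw.
  apply exp_le_compat. nra.
Qed.

Lemma weighted_am_gm_scaled A B u v l : 0 < A -> 0 < B -> 0 < u -> 0 < v -> 0 < l < 1 ->
  Rpower u l * Rpower v (1 - l)
  <= Rpower A l * Rpower B (1 - l) * (l * (u / A) + (1 - l) * (v / B)).
Proof.
  intros hA hB hu hv hl.
  replace u with (A * (u / A)) at 1 by (field; lra).
  replace v with (B * (v / B)) at 1 by (field; lra).
  rewrite <- !Rpower_mult_distr by (try apply Rdiv_lt_0_compat; assumption).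
  replace (Rpower A l * Rpower (u / A) l * (Rpower B (1 - l) * Rpower (v / B) (1 - l)))
    with (Rpower A l * Rpower B (1 - l) * (Rpower (u / A) l * Rpower (v / B) (1 - l)))
    by ring.
  apply Rmult_le_compat_l.
  - unfold Rpower. apply Rlt_le, Rmult_lt_0_compat; apply exp_pos.
  - apply weighted_am_gm; try apply Rdiv_lt_0_compat; assumption.
Qed.

Section NonnegativeIntegrand.

Variable f : R -> R.
Hypothesis f_cont : forall s, 0 < s -> continuous f s.
Hypothesis f_ge0 : forall s, 0 < s -> 0 <= f s.

Lemma ex_RInt_pos a b : 0 < a -> 0 < b -> ex_RInt f a b.
Proof.
  intros ha hb. apply (@ex_RInt_continuous R_CompleteNormedModule).
  intros z [hz _]. apply f_cont.
  eapply Rlt_le_trans; [|exact hz]. apply Rmin_glb_lt; assumption.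
Qed.

Lemma RInt_pos_ge0 a b : 0 < a -> a <= b -> 0 <= RInt f a b.
Proof.
  intros ha hab. apply RInt_ge_0; [exact hab | apply ex_RInt_pos; lra |].
  intros s hs. apply f_ge0. lra.
Qed.

Lemma RInt_le_widen a' a b b' :
  0 < a' -> a' <= a -> a <= b -> b <= b' -> RInt f a b <= RInt f a' b'.
Proof.
  intros ha' ha'a hab hbb'.
  rewrite <- (RInt_Chasles f a' a b'), <- (RInt_Chasles f a b b')
    by (apply ex_RInt_pos; lra).
  pose proof (RInt_pos_ge0 a' a ha' ha'a). pose proof (RInt_pos_ge0 b b' ltac:(lra) hbb').
  change plus with Rplus. lra.
Qed.

Lemma RInt_1_le_of_le_exp_half K b : 0 < K ->
  (forall s, 1 <= s -> f s <= K * exp (- s / 2)) -> 1 <= b -> RInt f 1 b <= 2 * K.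
Proof.
  intros hK hf hb.
  assert (I : is_RInt (fun s => K * exp (- s / 2)) 1 b
                (minus (-2 * K * exp (- b / 2)) (-2 * K * exp (- 1 / 2)))).
  { apply (@is_RInt_derive R_CompleteNormedModule (fun s => -2 * K * exp (- s / 2))).
    - intros z _. auto_derive; [exact I|]. unfold Rdiv. field.
    - intros z _. apply (@ex_derive_continuous R_AbsRing R_NormedModule).
      auto_derive. exact I. }
  apply Rle_trans with (RInt (fun s => K * exp (- s / 2)) 1 b).
  - apply RInt_le; [exact hb | apply ex_RInt_pos; lra | eexists; exact I |].
    intros s hs. apply hf. lra.
  - rewrite (is_RInt_unique _ _ _ _ I). unfold minus, plus, opp; simpl.
    pose proof (exp_pos (- b / 2)).
    assert (exp (- 1 / 2) <= 1) by (rewrite <- exp_0; apply exp_le_compat; lra).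
    nra.
Qed.

Lemma is_RInt_gen_of_bounded :
  (exists M, forall a b, 0 < a -> a <= b -> RInt f a b <= M) ->
  exists L, is_RInt_gen f (at_right 0) (Rbar_locally p_infty) L /\
    (forall a b, 0 < a -> a <= b -> RInt f a b <= L) /\
    (forall eps, 0 < eps -> exists a b, 0 < a /\ a <= b /\ L - eps < RInt f a b).
Proof.
  intros [M HM].
  set (E := fun v => exists a b, 0 < a /\ a <= b /\ v = RInt f a b).
  assert (bE : bound E).
  { exists M. intros v [a [b [ha [hb ->]]]]. apply HM; assumption. }
  assert (nE : exists v, E v) by (exists (RInt f 1 1), 1, 1; repeat split; lra).
  destruct (completeness E bE nE) as [L [HL1 HL2]].
  assert (up : forall a b, 0 < a -> a <= b -> RInt f a b <= L).
  { intros a b ha hb. apply HL1. exists a, b; auto. }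
  assert (approx : forall eps, 0 < eps ->
            exists a b, 0 < a /\ a <= b /\ L - eps < RInt f a b).
  { intros eps he. apply NNPP. intros Hn.
    enough (L <= L - eps) by lra.
    apply HL2. intros v [a [b [ha [hb ->]]]].
    destruct (Rle_lt_dec (RInt f a b) (L - eps)) as [h|h]; [exact h|].
    exfalso; apply Hn; exists a, b; auto. }
  exists L. split; [|split; assumption].
  intros P [eps HP].
  destruct (approx eps (cond_pos eps)) as [a0 [b0 [ha0 [hb0 hi]]]].
  exists (fun a => 0 < a < a0) (fun b => b0 < b).
  - exists (mkposreal a0 ha0). intros z hz hz0. split; [exact hz0|].
    unfold ball in hz; simpl in hz; unfold AbsRing_ball, abs, minus, plus, opp in hz; simpl in hz.
    apply Rabs_def2 in hz. lra.
  - exists b0. auto.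
  - intros a b [ha1 ha2] hb. simpl. exists (RInt f a b). split.
    + apply (@RInt_correct R_CompleteNormedModule), ex_RInt_pos; lra.
    + apply HP. unfold ball; simpl; unfold AbsRing_ball, abs, minus, plus, opp; simpl.
      pose proof (up a b ha1 ltac:(lra)).
      pose proof (RInt_le_widen a a0 b0 b ha1 ltac:(lra) hb0 ltac:(lra)).
      apply Rabs_def1; lra.
Qed.

End NonnegativeIntegrand.

Lemma RInt_le_lin_comb f g h k1 k2 a b :
  (forall s, 0 < s -> continuous f s) -> (forall s, 0 < s -> continuous g s) ->
  (forall s, 0 < s -> continuous h s) -> 0 < a -> a <= b ->
  (forall s, 0 < s -> f s <= k1 * g s + k2 * h s) ->
  RInt f a b <= k1 * RInt g a b + k2 * RInt h a b.
Proof.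
  intros hf hg hh ha hab hle.
  assert (I : is_RInt (fun s => k1 * g s + k2 * h s) a b (k1 * RInt g a b + k2 * RInt h a b)).
  { apply (is_RInt_plus (V := R_NormedModule)); apply (is_RInt_scal (V := R_NormedModule));
      apply (@RInt_correct R_CompleteNormedModule);
      [apply (ex_RInt_pos g hg) | apply (ex_RInt_pos h hh)]; lra. }
  rewrite <- (is_RInt_unique _ _ _ _ I).
  apply RInt_le; [exact hab | apply (ex_RInt_pos f hf); lra | eexists; exact I |].
  intros s hs. apply hle. lra.
Qed.

Definition gamma_integrand (x s : R) : R := Rpower s (x - 1) * exp (- s).

Lemma gamma_integrand_exp x s : gamma_integrand x s = exp ((x - 1) * ln s - s).
Proof. unfold gamma_integrand, Rpower. rewrite <- exp_plus. f_equal; ring. Qed.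

Lemma gamma_integrand_pos x s : 0 < gamma_integrand x s.
Proof. rewrite gamma_integrand_exp. apply exp_pos. Qed.

Lemma gamma_integrand_ge0 x s : 0 < s -> 0 <= gamma_integrand x s.
Proof. intros _. apply Rlt_le, gamma_integrand_pos. Qed.

Lemma gamma_integrand_cont x s : 0 < s -> continuous (gamma_integrand x) s.
Proof.
  intros hs. apply (@ex_derive_continuous R_AbsRing R_NormedModule).
  unfold gamma_integrand, Rpower. auto_derive. exact hs.
Qed.

Lemma gamma_integrand_interp x y l s :
  gamma_integrand (l * x + (1 - l) * y) s
  = Rpower (gamma_integrand x s) l * Rpower (gamma_integrand y s) (1 - l).
Proof.
  rewrite !gamma_integrand_exp. unfold Rpower. rewrite !ln_exp, <- exp_plus.
  f_equal. ring.
Qed.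

Lemma gamma_integrand_le_exp_half x :
  exists K, 0 < K /\ forall s, 1 <= s -> gamma_integrand x s <= K * exp (- s / 2).
Proof.
  set (c := Rmax (x - 1) 1).
  assert (hc : 1 <= c) by apply Rmax_r.
  exists (exp (c * (ln (2 * c) - 1))). split; [apply exp_pos|].
  intros s hs. rewrite gamma_integrand_exp, <- exp_plus. apply exp_le_compat.
  assert (0 <= ln s) by (rewrite <- ln_1; apply ln_le; lra).
  assert ((x - 1) * ln s <= c * ln s) by (apply Rmult_le_compat_r; [lra | apply Rmax_l]).
  (* the tangent line of ln at 2c *)
  assert (hln : ln s - ln (2 * c) <= (s - 2 * c) / (2 * c)) by (apply ln_sub_le; lra).
  assert (htan : c * (ln s - ln (2 * c)) <= c * ((s - 2 * c) / (2 * c)))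
    by (apply Rmult_le_compat_l; lra).
  replace (c * ((s - 2 * c) / (2 * c))) with (s / 2 - c) in htan by (field; lra).
  lra.
Qed.

Lemma gamma_integrand_tail_small x eps : 0 < eps ->
  exists B, 1 <= B /\ forall s, B <= s -> gamma_integrand x s <= eps.
Proof.
  intros he. destruct (gamma_integrand_le_exp_half x) as [K [hK HK]].
  exists (Rmax 1 (2 * ln (K / eps))). split; [apply Rmax_l|].
  intros s hs. pose proof (Rmax_l 1 (2 * ln (K / eps))). pose proof (Rmax_r 1 (2 * ln (K / eps))).
  eapply Rle_trans; [apply HK; lra|].
  assert (hexp : exp (- s / 2) <= exp (ln (eps / K))).
  { apply exp_le_compat. rewrite ln_div by lra.
    assert (ln (K / eps) = ln K - ln eps) by (apply ln_div; lra). lra. }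
  rewrite exp_ln in hexp by (apply Rdiv_lt_0_compat; lra).
  apply Rle_trans with (K * (eps / K)); [apply Rmult_le_compat_l; lra|]. right; field; lra.
Qed.

Lemma gamma_integrand_succ_small_near0 x eps : 0 < x -> 0 < eps ->
  exists a0, 0 < a0 /\ forall a, 0 < a <= a0 -> gamma_integrand (x + 1) a <= eps.
Proof.
  intros hx he. exists (Rpower eps (/ x)). split; [apply exp_pos|].
  intros a [ha ha0]. unfold gamma_integrand. replace (x + 1 - 1) with x by ring.
  assert (exp (- a) <= 1) by (rewrite <- exp_0; apply exp_le_compat; lra).
  assert (Rpower a x <= eps).
  { apply Rle_trans with (Rpower (Rpower eps (/ x)) x).
    - apply Rle_Rpower_l; lra.
    - rewrite Rpower_mult. replace (/ x * x) with 1 by (field; lra). rewrite Rpower_1; lra. }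
  pose proof (exp_pos (- a)). pose proof (exp_pos (x * ln a)). unfold Rpower in *. nra.
Qed.

Lemma RInt_gamma_integrand_0_1_le x a : 0 < x -> 0 < a <= 1 ->
  RInt (gamma_integrand x) a 1 <= / x.
Proof.
  intros hx [ha ha1].
  assert (I : is_RInt (fun s => Rpower s (x - 1)) a 1
                (minus (Rpower 1 x / x) (Rpower a x / x))).
  { apply (@is_RInt_derive R_CompleteNormedModule (fun s => Rpower s x / x)).
    - intros z [hz _]. assert (0 < z) by (eapply Rlt_le_trans; [|exact hz]; apply Rmin_glb_lt; lra).
      unfold Rpower. auto_derive; [lra|].
      replace ((x - 1) * ln z) with (x * ln z + - ln z) by ring.
      rewrite exp_plus, exp_Ropp, exp_ln by lra. field. lra.
    - intros z [hz _]. assert (0 < z) by (eapply Rlt_le_trans; [|exact hz]; apply Rmin_glb_lt; lra).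
      apply (@ex_derive_continuous R_AbsRing R_NormedModule). unfold Rpower. auto_derive. lra. }
  apply Rle_trans with (RInt (fun s => Rpower s (x - 1)) a 1).
  - apply RInt_le; [exact ha1 | apply (ex_RInt_pos _ (gamma_integrand_cont x)); lra
                   | eexists; exact I |].
    intros s hs. unfold gamma_integrand. pose proof (exp_pos ((x - 1) * ln s)).
    assert (exp (- s) <= 1) by (rewrite <- exp_0; apply exp_le_compat; lra).
    unfold Rpower. nra.
  - rewrite (is_RInt_unique _ _ _ _ I). unfold minus, plus, opp; simpl.
    unfold Rpower at 1. rewrite ln_1, Rmult_0_r, exp_0.
    pose proof (exp_pos (x * ln a)). assert (0 < / x) by (apply Rinv_0_lt_compat; lra).
    unfold Rdiv, Rpower. nra.
Qed.

Lemma RInt_gamma_integrand_bounded x : 0 < x ->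
  exists M, forall a b, 0 < a -> a <= b -> RInt (gamma_integrand x) a b <= M.
Proof.
  intros hx. destruct (gamma_integrand_le_exp_half x) as [K [hK HK]].
  pose proof (gamma_integrand_cont x) as hc. pose proof (gamma_integrand_ge0 x) as hn.
  exists (/ x + 2 * K). intros a b ha hab.
  pose proof (Rmin_l a 1). pose proof (Rmin_r a 1).
  pose proof (Rmax_l b 1). pose proof (Rmax_r b 1).
  assert (0 < Rmin a 1) by (apply Rmin_glb_lt; lra).
  apply Rle_trans with (RInt (gamma_integrand x) (Rmin a 1) (Rmax b 1)).
  - apply RInt_le_widen; auto; lra.
  - rewrite <- (RInt_Chasles (gamma_integrand x) (Rmin a 1) 1 (Rmax b 1))
      by (apply (ex_RInt_pos _ hc); lra).
    change plus with Rplus.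
    pose proof (RInt_gamma_integrand_0_1_le x (Rmin a 1) hx ltac:(lra)).
    pose proof (RInt_1_le_of_le_exp_half _ hc K (Rmax b 1) hK HK ltac:(lra)).
    lra.
Qed.

Lemma Gamma_sup x : 0 < x ->
  (forall a b, 0 < a -> a <= b -> RInt (gamma_integrand x) a b <= Gamma x) /\
  (forall eps, 0 < eps ->
     exists a b, 0 < a /\ a <= b /\ Gamma x - eps < RInt (gamma_integrand x) a b).
Proof.
  intros hx.
  destruct (is_RInt_gen_of_bounded _ (gamma_integrand_cont x) (gamma_integrand_ge0 x)
              (RInt_gamma_integrand_bounded x hx)) as [L [HL Hsup]].
  replace (Gamma x) with L; [exact Hsup|].
  symmetry. unfold Gamma. apply (@is_RInt_gen_unique R_CompleteNormedModule); try typeclasses eauto.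
  exact HL.
Qed.

Lemma Gamma_pos x : 0 < x -> 0 < Gamma x.
Proof.
  intros hx. apply Rlt_le_trans with (RInt (gamma_integrand x) 1 2).
  - apply RInt_gt_0; [lra | intros; apply gamma_integrand_pos |].
    intros s hs. apply gamma_integrand_cont. lra.
  - apply (proj1 (Gamma_sup x hx)); lra.
Qed.

Lemma RInt_gamma_integrand_succ x a b : 0 < a -> a <= b ->
  RInt (gamma_integrand (x + 1)) a b
  = gamma_integrand (x + 1) a - gamma_integrand (x + 1) b + x * RInt (gamma_integrand x) a b.
Proof.
  intros ha hab.
  pose proof (ex_RInt_pos _ (gamma_integrand_cont x)) as ex.
  pose proof (ex_RInt_pos _ (gamma_integrand_cont (x + 1))) as ex1.
  assert (I : is_RInt (fun s => gamma_integrand (x + 1) s - x * gamma_integrand x s) a b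
                (minus (- gamma_integrand (x + 1) b) (- gamma_integrand (x + 1) a))).
  { apply (@is_RInt_derive R_CompleteNormedModule (fun s => - gamma_integrand (x + 1) s));
      intros z [hz _]; assert (0 < z) by (eapply Rlt_le_trans; [|exact hz]; apply Rmin_glb_lt; lra);
      unfold gamma_integrand, Rpower; replace (x + 1 - 1) with x by ring.
    - auto_derive; [lra|].
      replace ((x - 1) * ln z) with (x * ln z + - ln z) by ring.
      rewrite exp_plus, (exp_Ropp (ln z)), exp_ln by lra. field. lra.
    - apply (@ex_derive_continuous R_AbsRing R_NormedModule). auto_derive. lra. }
  assert (I' : is_RInt (fun s => gamma_integrand (x + 1) s - x * gamma_integrand x s) a b
     (RInt (gamma_integrand (x + 1)) a b - x * RInt (gamma_integrand x) a b)).
  { apply (is_RInt_minus (V := R_NormedModule)); [|apply (is_RInt_scal (V := R_NormedModule))];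
      apply (@RInt_correct R_CompleteNormedModule); [apply ex1 | apply ex]; lra. }
  pose proof (is_RInt_unique _ _ _ _ I) as e. rewrite (is_RInt_unique _ _ _ _ I') in e.
  unfold minus, plus, opp in e; simpl in e. lra.
Qed.

Lemma Gamma_succ_le x : 0 < x -> Gamma (x + 1) <= x * Gamma x.
Proof.
  intros hx. apply Rle_plus_epsilon. intros eps he.
  destruct (proj2 (Gamma_sup (x + 1) ltac:(lra)) (eps / 2) ltac:(lra)) as [a [b [ha [hab hi]]]].
  destruct (gamma_integrand_succ_small_near0 x (eps / 2) hx ltac:(lra)) as [a0 [ha0 Ha0]].
  pose proof (Rmin_l a a0). pose proof (Rmin_r a a0).
  set (a' := Rmin a a0) in *.
  assert (ha' : 0 < a') by (apply Rmin_glb_lt; lra).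
  pose proof (RInt_le_widen _ (gamma_integrand_cont (x + 1)) (gamma_integrand_ge0 (x + 1))
                a' a b b ha' ltac:(lra) hab ltac:(lra)) as hwiden.
  rewrite (RInt_gamma_integrand_succ x a' b) in hwiden by lra.
  pose proof (proj1 (Gamma_sup x hx) a' b ha' ltac:(lra)).
  pose proof (Ha0 a' ltac:(lra)). pose proof (gamma_integrand_pos (x + 1) b).
  assert (x * RInt (gamma_integrand x) a' b <= x * Gamma x) by (apply Rmult_le_compat_l; lra).
  lra.
Qed.

Lemma Gamma_succ_ge x : 0 < x -> x * Gamma x <= Gamma (x + 1).
Proof.
  intros hx. apply Rle_plus_epsilon. intros eps he.
  destruct (proj2 (Gamma_sup x hx) (eps / (2 * x)) ltac:(apply Rdiv_lt_0_compat; lra))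
    as [a [b [ha [hab hi]]]].
  destruct (gamma_integrand_tail_small (x + 1) (eps / 2) ltac:(lra)) as [B [hB HB]].
  pose proof (Rmax_l b B). pose proof (Rmax_r b B).
  set (b' := Rmax b B) in *.
  pose proof (proj1 (Gamma_sup (x + 1) ltac:(lra)) a b' ha ltac:(lra)) as hsup.
  rewrite RInt_gamma_integrand_succ in hsup by lra.
  pose proof (RInt_le_widen _ (gamma_integrand_cont x) (gamma_integrand_ge0 x)
                a a b b' ha ltac:(lra) hab ltac:(lra)).
  pose proof (HB b' ltac:(lra)). pose proof (gamma_integrand_pos (x + 1) a).
  assert (hx_int : x * (Gamma x - eps / (2 * x)) < x * RInt (gamma_integrand x) a b')
    by (apply Rmult_lt_compat_l; lra).
  replace (x * (Gamma x - eps / (2 * x))) with (x * Gamma x - eps / 2) in hx_int by (field; lra).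
  lra.
Qed.

Lemma Gamma_succ x : 0 < x -> Gamma (x + 1) = x * Gamma x.
Proof. intros hx. apply Rle_antisym; [apply Gamma_succ_le | apply Gamma_succ_ge]; exact hx. Qed.

Lemma Gamma_interp_le x y l : 0 < x -> 0 < y -> 0 < l < 1 ->
  Gamma (l * x + (1 - l) * y) <= Rpower (Gamma x) l * Rpower (Gamma y) (1 - l).
Proof.
  intros hx hy hl. set (z := l * x + (1 - l) * y).
  assert (hz : 0 < z).
  { unfold z. pose proof (Rmult_lt_0_compat l x ltac:(lra) hx).
    pose proof (Rmult_lt_0_compat (1 - l) y ltac:(lra) hy). lra. }
  set (A := Gamma x). set (B := Gamma y).
  assert (hA : 0 < A) by (apply Gamma_pos; exact hx).
  assert (hB : 0 < B) by (apply Gamma_pos; exact hy).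
  set (C := Rpower A l * Rpower B (1 - l)).
  assert (hC : 0 < C) by (apply Rmult_lt_0_compat; apply exp_pos).
  set (k1 := C * l / A). set (k2 := C * (1 - l) / B).
  assert (hk1 : 0 <= k1) by (apply Rdiv_le_0_compat; [apply Rmult_le_pos|]; lra).
  assert (hk2 : 0 <= k2) by (apply Rdiv_le_0_compat; [apply Rmult_le_pos|]; lra).
  (* pointwise weighted AM-GM; integrated, it becomes Hoelder's inequality *)
  assert (pointwise : forall s, 0 < s ->
            gamma_integrand z s <= k1 * gamma_integrand x s + k2 * gamma_integrand y s).
  { intros s _. unfold z. rewrite gamma_integrand_interp.
    eapply Rle_trans; [apply (weighted_am_gm_scaled A B); auto; apply gamma_integrand_pos|].
    right. fold C. unfold k1, k2. field. lra. }
  apply Rle_plus_epsilon. intros eps he.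
  destruct (proj2 (Gamma_sup z hz) eps he) as [a [b [ha [hab hi]]]].
  pose proof (RInt_le_lin_comb _ _ _ k1 k2 a b (gamma_integrand_cont z) (gamma_integrand_cont x)
                (gamma_integrand_cont y) ha hab pointwise).
  pose proof (proj1 (Gamma_sup x hx) a b ha hab) as hA_sup.
  pose proof (proj1 (Gamma_sup y hy) a b ha hab) as hB_sup.
  fold A B in hA_sup, hB_sup.
  assert (k1 * RInt (gamma_integrand x) a b <= k1 * A) by (apply Rmult_le_compat_l; lra).
  assert (k2 * RInt (gamma_integrand y) a b <= k2 * B) by (apply Rmult_le_compat_l; lra).
  assert (k1 * A + k2 * B = C) by (unfold k1, k2; field; lra).
  lra.
Qed.

Definition lnGamma (x : R) : R := ln (Gamma x).

Lemma lnGamma_succ x : 0 < x -> lnGamma (x + 1) = ln x + lnGamma x.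
Proof. intros hx. unfold lnGamma. rewrite Gamma_succ by exact hx. apply ln_mult, Gamma_pos; exact hx. Qed.

Lemma lnGamma_convex x y l : 0 < x -> 0 < y -> 0 < l < 1 ->
  lnGamma (l * x + (1 - l) * y) <= l * lnGamma x + (1 - l) * lnGamma y.
Proof.
  intros hx hy hl. unfold lnGamma.
  assert (hz : 0 < l * x + (1 - l) * y).
  { pose proof (Rmult_lt_0_compat l x ltac:(lra) hx).
    pose proof (Rmult_lt_0_compat (1 - l) y ltac:(lra) hy). lra. }
  eapply Rle_trans; [apply ln_le; [apply Gamma_pos, hz | apply Gamma_interp_le; assumption]|].
  unfold Rpower. rewrite ln_mult by apply exp_pos. rewrite !ln_exp. lra.
Qed.

Lemma lnGamma_secant_le u v w : 0 < u -> u < v -> v < w ->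
  (lnGamma v - lnGamma u) * (w - v) <= (lnGamma w - lnGamma v) * (v - u).
Proof.
  intros hu huv hvw. set (l := (w - v) / (w - u)).
  assert (hl : 0 < l < 1).
  { unfold l; split; [apply Rdiv_lt_0_compat; lra|].
    apply Rmult_lt_reg_r with (w - u); [lra|]. field_simplify; lra. }
  pose proof (lnGamma_convex u w l hu ltac:(lra) hl) as h.
  replace (l * u + (1 - l) * w) with v in h by (unfold l; field; lra).
  assert ((lnGamma v - lnGamma u) * (w - v) - (lnGamma w - lnGamma v) * (v - u)
          = (w - u) * (lnGamma v - (l * lnGamma u + (1 - l) * lnGamma w)))
    by (unfold l; field; lra).
  nra.
Qed.

(* compare the secant over [a, a + h] with the unit secants [a - 1, a] and [a + h, a + h + 1] *)
Lemma lnGamma_incr_bounds a h : 1 < a -> 0 < h ->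
  h * ln (a - 1) <= lnGamma (a + h) - lnGamma a <= h * ln (a + h).
Proof.
  intros ha hh.
  pose proof (lnGamma_secant_le (a - 1) a (a + h) ltac:(lra) ltac:(lra) ltac:(lra)) as S1.
  pose proof (lnGamma_secant_le a (a + h) (a + h + 1) ltac:(lra) ltac:(lra) ltac:(lra)) as S2.
  replace (lnGamma a) with (lnGamma (a - 1 + 1)) in S1 at 1 by (f_equal; ring).
  rewrite lnGamma_succ in S1, S2 by lra.
  replace (a + h - a) with h in S2 by ring. replace (a - (a - 1)) with 1 in S1 by ring.
  replace (a + h + 1 - (a + h)) with 1 in S2 by ring. replace (a + h - a) with h in S1 by ring.
  lra.
Qed.

Definition lnGamma_rem (A t : R) : R := lnGamma (A + t) - lnGamma A - t * ln A.

Lemma lnGamma_rem_bound_far A t : 1 < A - Rabs t ->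
  Rabs (lnGamma_rem A t) <= Rabs t * (ln (A + Rabs t) - ln (A - Rabs t - 1)).
Proof.
  intros h. unfold lnGamma_rem.
  destruct (Rtotal_order t 0) as [ht|[ht|ht]].
  - rewrite (Rabs_left t ht) in h |- *.
    pose proof (lnGamma_incr_bounds (A + t) (- t) ltac:(lra) ltac:(lra)) as [lo up].
    replace (A + t + - t) with A in lo, up by ring.
    assert (ln (A + t - 1) <= ln A) by (apply ln_le; lra).
    assert (ln A <= ln (A + - t)) by (apply ln_le; lra).
    apply Rabs_le. replace (A + t - 1) with (A - - t - 1) in * by ring. nra.
  - subst t. rewrite Rplus_0_r, Rabs_R0. replace (lnGamma A - lnGamma A - 0 * ln A) with 0 by ring.
    rewrite Rabs_R0. lra.
  - rewrite (Rabs_right t ltac:(lra)) in h |- *.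
    pose proof (lnGamma_incr_bounds A t ltac:(lra) ht) as [lo up].
    assert (ln (A - t - 1) <= ln (A - 1)) by (apply ln_le; lra).
    assert (ln (A - 1) <= ln A) by (apply ln_le; lra).
    assert (ln A <= ln (A + t)) by (apply ln_le; lra).
    apply Rabs_le. nra.
Qed.

Lemma lnGamma_rem_shift A t : 0 < A -> 0 < A + t ->
  lnGamma_rem A t = lnGamma_rem (A + 1) t + t * (ln (A + 1) - ln A) - (ln (A + t) - ln A).
Proof.
  intros hA hAt. unfold lnGamma_rem. replace (A + 1 + t) with (A + t + 1) by ring.
  rewrite !lnGamma_succ by assumption. ring.
Qed.

Lemma Rabs_ln_add_sub_le A t : 0 < A -> Rabs t <= A / 2 ->
  Rabs (ln (A + t) - ln A) <= 2 * Rabs t / A.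
Proof.
  intros hA ht. set (u := Rabs t) in *.
  assert (htu : - u <= t <= u) by (apply Rabs_le_between, Rle_refl).
  pose proof (ln_sub_le A (A + t) hA ltac:(lra)) as up.
  pose proof (ln_sub_ge A (A + t) hA ltac:(lra)) as lo.
  replace (A + t - A) with t in up, lo by ring.
  assert (t / A <= 2 * u / A) by (apply Rdiv_le_cross; nra).
  assert (- (2 * u / A) <= t / (A + t)).
  { replace (- (2 * u / A)) with ((- 2 * u) / A) by (field; lra). apply Rdiv_le_cross; nra. }
  apply Rabs_le. lra.
Qed.

(* the shift makes lnGamma_rem_bound_far applicable even when A <= 1 *)
Lemma lnGamma_rem_bound A t : 0 < A -> Rabs t <= A / 2 ->
  Rabs (lnGamma_rem A t) <= Rabs t / A * (4 * Rabs t + 5).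
Proof.
  intros hA ht. set (u := Rabs t) in *.
  assert (hu : 0 <= u) by apply Rabs_pos.
  assert (htu : - u <= t <= u) by (apply Rabs_le_between, Rle_refl).
  rewrite lnGamma_rem_shift by lra.
  assert (X1 : Rabs (lnGamma_rem (A + 1) t) <= u * (2 * (2 * u + 1) / A)).
  { pose proof (lnGamma_rem_bound_far (A + 1) t ltac:(fold u; lra)) as far. fold u in far.
    replace (A + 1 - u - 1) with (A - u) in far by ring.
    pose proof (ln_sub_le (A - u) (A + 1 + u) ltac:(lra) ltac:(lra)).
    assert ((A + 1 + u - (A - u)) / (A - u) <= 2 * (2 * u + 1) / A)
      by (apply Rdiv_le_cross; nra).
    eapply Rle_trans; [exact far|]. apply Rmult_le_compat_l; lra. }
  assert (X2 : Rabs (t * (ln (A + 1) - ln A)) <= u * / A).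
  { pose proof (ln_sub_le A (A + 1) hA ltac:(lra)) as up.
    assert (lo : 0 <= ln (A + 1) - ln A) by (pose proof (ln_le A (A + 1) hA ltac:(lra)); lra).
    replace ((A + 1 - A) / A) with (/ A) in up by (field; lra).
    rewrite Rabs_mult, (Rabs_pos_eq (ln (A + 1) - ln A)) by exact lo.
    apply Rmult_le_compat; [apply Rabs_pos | exact lo | apply Rle_refl | exact up]. }
  pose proof (Rabs_ln_add_sub_le A t hA ht) as X3. fold u in X3.
  replace (u / A * (4 * u + 5)) with (u * (2 * (2 * u + 1) / A) + u * / A + 2 * u / A)
    by (field; lra).
  eapply Rle_trans; [apply Rabs_triang|].
  eapply Rle_trans; [apply Rplus_le_compat_r, Rabs_triang|].
  rewrite Rabs_Ropp. lra.
Qed.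

Lemma ln_Gamma_ratio_approx N M t : 0 < M <= N -> Rabs t <= M / 2 ->
  Rabs (ln (Gamma (N + t) / Gamma N * (Gamma M / Gamma (M + t))) - (ln N - ln M) * t)
  <= 2 * (Rabs t / M * (4 * Rabs t + 5)).
Proof.
  intros hMN ht.
  assert (htu : - Rabs t <= t <= Rabs t) by (apply Rabs_le_between; lra).
  assert (e : ln (Gamma (N + t) / Gamma N * (Gamma M / Gamma (M + t))) - (ln N - ln M) * t
              = lnGamma_rem N t - lnGamma_rem M t).
  { pose proof (Gamma_pos N ltac:(lra)). pose proof (Gamma_pos M ltac:(lra)).
    pose proof (Gamma_pos (N + t) ltac:(lra)). pose proof (Gamma_pos (M + t) ltac:(lra)).
    rewrite ln_mult by (apply Rdiv_lt_0_compat; assumption).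
    rewrite !ln_div by assumption. unfold lnGamma_rem, lnGamma. ring. }
  rewrite e. unfold Rminus. eapply Rle_trans; [apply Rabs_triang|]. rewrite Rabs_Ropp.
  pose proof (lnGamma_rem_bound N t ltac:(lra) ltac:(lra)).
  pose proof (lnGamma_rem_bound M t ltac:(lra) ltac:(lra)).
  assert (Rabs t / N <= Rabs t / M) by (apply Rdiv_le_cross; [lra|lra|]; pose proof (Rabs_pos t); nra).
  assert (Rabs t / N * (4 * Rabs t + 5) <= Rabs t / M * (4 * Rabs t + 5))
    by (apply Rmult_le_compat_r; pose proof (Rabs_pos t); lra).
  lra.
Qed.

Lemma ln_gap_mul_sqr_ge N M : 1 <= M <= N ->
  Rmin (ln N / 2) (N - M) <= (ln N - ln M) * M ^ 2.
Proof.
  intros [hM hMN].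
  destruct (Rle_lt_dec (M * M) N) as [c|c].
  - assert (hln : ln (M * M) <= ln N) by (apply ln_le; nra).
    rewrite ln_mult in hln by lra.
    assert (0 <= ln M) by (rewrite <- ln_1; apply ln_le; lra).
    assert (1 <= M ^ 2) by (simpl; nra).
    assert ((ln N - ln M) * 1 <= (ln N - ln M) * M ^ 2) by (apply Rmult_le_compat_l; lra).
    eapply Rle_trans; [apply Rmin_l|]. lra.
  - pose proof (ln_sub_ge M N ltac:(lra) ltac:(lra)).
    assert (0 <= (N - M) / N) by (apply Rdiv_le_0_compat; lra).
    assert ((N - M) / N * N = N - M) by (field; lra).
    eapply Rle_trans; [apply Rmin_r|]. simpl. nra.
Qed.

Lemma r_seq_sqr p n : (p n < n)%nat ->
  r_seq p n ^ 2 = ln (INR n) - ln (INR n - INR (p n)).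
Proof.
  intros hp. apply lt_INR in hp. pose proof (pos_INR (p n)). unfold r_seq.
  replace (1 - INR (p n) / INR n) with ((INR n - INR (p n)) / INR n) by (field; lra).
  rewrite ln_div by lra. rewrite pow2_sqrt; [ring|].
  assert (ln (INR n - INR (p n)) <= ln (INR n)) by (apply ln_le; lra). lra.
Qed.

Lemma sqrt_ratio_le_r_seq p n : (p n < n)%nat -> sqrt (INR (p n) / INR n) <= r_seq p n.
Proof.
  intros hp. apply lt_INR in hp. pose proof (pos_INR (p n)).
  unfold r_seq. apply sqrt_le_1_alt.
  assert (INR (p n) / INR n < 1).
  { apply Rmult_lt_reg_r with (INR n); [lra|]. field_simplify; lra. }
  pose proof (ln_le_sub1 (1 - INR (p n) / INR n) ltac:(lra)). lra.
Qed.

Lemma ratio_eventually_ge (p : nat -> nat) y : 0 < y ->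
  is_lim_seq (fun n => INR (p n) / INR n) y ->
  eventually (fun n => y / 2 <= INR (p n) / INR n).
Proof.
  intros hy hlim. apply is_lim_seq_spec in hlim.
  generalize (hlim (mkposreal (y / 2) ltac:(lra))). apply filter_imp.
  intros n hn. simpl in hn. apply Rabs_def2 in hn. lra.
Qed.

Lemma eventually_ge N : eventually (fun n => (N <= n)%nat).
Proof. exists N. intros n hn. exact hn. Qed.

Lemma r_seq_mul_gap_sqr_ge p n : (p n < n)%nat ->
  Rmin (ln (INR n) / 2) (INR (p n)) <= (r_seq p n * (INR n - INR (p n))) ^ 2.
Proof.
  intros hpn. pose proof (pos_INR (p n)).
  assert (1 <= INR n - INR (p n)) by (rewrite <- minus_INR by lia; apply (le_INR 1); lia).
  rewrite Rpow_mult_distr, r_seq_sqr by exact hpn.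
  replace (INR (p n)) with (INR n - (INR n - INR (p n))) at 1 by ring.
  apply ln_gap_mul_sqr_ge. lra.
Qed.

Lemma r_seq_mul_gap_lim p y : 0 < y ->
  (forall n, (0 < n)%nat -> (p n < n)%nat) ->
  is_lim_seq (fun n => INR (p n) / INR n) y ->
  is_lim_seq (fun n => r_seq p n * (INR n - INR (p n))) p_infty.
Proof.
  intros hy hp hlim. apply is_lim_seq_spec. intros K.
  pose proof is_lim_seq_INR as hINR. apply is_lim_seq_spec in hINR.
  generalize (filter_and _ _ (ratio_eventually_ge p y hy hlim)
                (filter_and _ _ (eventually_ge 1)
                   (hINR (Rmax (2 * K ^ 2 / y) (exp (2 * K ^ 2)))))).
  apply filter_imp. intros n [hratio [hn hbig]].
  pose proof (Rmax_l (2 * K ^ 2 / y) (exp (2 * K ^ 2))).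
  pose proof (Rmax_r (2 * K ^ 2 / y) (exp (2 * K ^ 2))).
  assert (hN : 0 < INR n) by exact (lt_INR 0 n hn).
  assert (hlnN : K ^ 2 < ln (INR n) / 2).
  { pose proof (ln_increasing (exp (2 * K ^ 2)) (INR n) (exp_pos _) ltac:(lra)) as hl.
    rewrite ln_exp in hl. lra. }
  assert (hpN : K ^ 2 < INR (p n)).
  { assert (hK : y / 2 * (2 * K ^ 2 / y) < y / 2 * INR n) by (apply Rmult_lt_compat_l; lra).
    replace (y / 2 * (2 * K ^ 2 / y)) with (K ^ 2) in hK by (field; lra).
    replace (INR (p n)) with (INR (p n) / INR n * INR n) by (field; lra).
    eapply Rlt_le_trans; [exact hK | apply Rmult_le_compat_r; lra]. }
  pose proof (r_seq_mul_gap_sqr_ge p n (hp n hn)) as hsq.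
  assert (hw : 0 <= r_seq p n * (INR n - INR (p n))).
  { apply Rmult_le_pos; [apply sqrt_pos | pose proof (lt_INR _ _ (hp n hn)); lra]. }
  apply Rle_lt_trans with (Rabs K); [apply Rle_abs|].
  rewrite <- (Rabs_pos_eq _ hw). apply Rsqr_lt_abs_0. unfold Rsqr.
  assert (K ^ 2 < Rmin (ln (INR n) / 2) (INR (p n))) by (apply Rmin_glb_lt; lra).
  simpl in *. lra.
Qed.

Section BoundedByInverseRate.

Variables (p : nat -> nat) (t : nat -> R) (y C : R) (N0 : nat).
Hypothesis hp : forall n, (0 < n)%nat -> (p n < n)%nat.
Hypothesis hy : 0 < y.
Hypothesis hlim : is_lim_seq (fun n => INR (p n) / INR n) y.
Hypothesis ht : forall n, (N0 <= n)%nat -> Rabs (t n) <= C * / r_seq p n.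

Lemma t_mul_r_seq_eventually_le :
  eventually (fun n => sqrt (y / 2) <= r_seq p n /\ Rabs (t n) * r_seq p n <= C
                       /\ (p n < n)%nat).
Proof.
  generalize (filter_and _ _ (ratio_eventually_ge p y hy hlim)
                (filter_and _ _ (eventually_ge 1) (eventually_ge N0))).
  apply filter_imp. intros n [hratio [hn hN0]].
  assert (hr : sqrt (y / 2) <= r_seq p n).
  { eapply Rle_trans; [apply sqrt_le_1_alt, hratio | apply sqrt_ratio_le_r_seq, hp, hn]. }
  assert (0 < sqrt (y / 2)) by (apply sqrt_lt_R0; lra).
  split; [exact hr | split; [|apply hp, hn]].
  apply Rmult_le_reg_r with (/ r_seq p n); [apply Rinv_0_lt_compat; lra|].
  rewrite Rmult_assoc, Rinv_r, Rmult_1_r by lra. apply ht, hN0.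
Qed.

Lemma t_eventually_bounded : eventually (fun n => Rabs (t n) <= C / sqrt (y / 2)).
Proof.
  generalize t_mul_r_seq_eventually_le. apply filter_imp. intros n [hr [htr _]].
  assert (0 < sqrt (y / 2)) by (apply sqrt_lt_R0; lra).
  pose proof (Rabs_pos (t n)).
  apply Rmult_le_reg_r with (sqrt (y / 2)); [lra|].
  replace (C / sqrt (y / 2) * sqrt (y / 2)) with C by (field; lra). nra.
Qed.

Lemma t_div_half_gap_lim : is_lim_seq (fun n => Rabs (t n) / ((INR n - INR (p n)) / 2)) 0.
Proof.
  set (w n := r_seq p n * (INR n - INR (p n))).
  assert (hw : is_lim_seq w p_infty) by exact (r_seq_mul_gap_lim p y hy hp hlim).
  apply is_lim_seq_le_le_loc with (fun _ => 0) (fun n => 2 * C * / w n).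
  - generalize (filter_and _ _ t_mul_r_seq_eventually_le (proj2 (is_lim_seq_spec w p_infty) hw 0)).
    apply filter_imp. intros n [[hr [htr hpn]] hw0].
    apply lt_INR in hpn. pose proof (Rabs_pos (t n)).
    assert (0 < sqrt (y / 2)) by (apply sqrt_lt_R0; lra).
    split; [apply Rdiv_le_0_compat; lra|].
    unfold w in *. apply Rdiv_le_cross; [lra | exact hw0 |]. nra.
  - apply is_lim_seq_const.
  - replace (Finite 0) with (Rbar_mult (2 * C) (Rbar_inv p_infty)) by (simpl; f_equal; ring).
    apply is_lim_seq_scal_l, is_lim_seq_inv; [exact hw | discriminate].
Qed.

End BoundedByInverseRate.

Theorem lemma3 (p : nat -> nat) (t : nat -> R) (y : R) :
  (forall n : nat, (0 < n)%nat -> (p n < n)%nat) ->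
  0 < y <= 1 ->
  is_lim_seq (fun n : nat => INR (p n) / INR n) y ->
  (exists (C : R) (N : nat), forall n : nat, (N <= n)%nat ->
      Rabs (t n) <= C * / r_seq p n) ->
  is_lim_seq
    (fun n : nat =>
       ln (Gamma (INR n / 2 + t n) / Gamma (INR n / 2)
           * (Gamma ((INR n - INR (p n)) / 2)
              / Gamma ((INR n - INR (p n)) / 2 + t n)))
       - (r_seq p n) ^ 2 * t n)
    0.
Proof.
  intros hp [hy _] hlim [C [N0 ht]].
  set (T := C / sqrt (y / 2)).
  set (u n := Rabs (t n) / ((INR n - INR (p n)) / 2)).
  assert (hu : is_lim_seq u 0) by exact (t_div_half_gap_lim p t y C N0 hp hy hlim ht).
  apply is_lim_seq_abs_0, is_lim_seq_le_le_loc with (fun _ => 0) (fun n => 2 * (u n * (4 * T + 5))).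
  - generalize (filter_and _ _ (t_eventually_bounded p t y C N0 hp hy hlim ht)
                  (filter_and _ _ (eventually_ge 1)
                     (proj2 (is_lim_seq_spec u 0) hu (mkposreal (1 / 2) ltac:(lra))))).
    apply filter_imp. intros n [hT [hn hsmall]]. fold T in hT.
    pose proof (lt_INR _ _ (hp n hn)) as hpn. pose proof (pos_INR (p n)).
    rewrite r_seq_sqr by (apply hp, hn).
    replace (ln (INR n) - ln (INR n - INR (p n)))
      with (ln (INR n / 2) - ln ((INR n - INR (p n)) / 2)) by (rewrite !ln_div; lra).
    assert (hu0 : 0 <= u n) by (apply Rdiv_le_0_compat; [apply Rabs_pos | lra]).
    simpl in hsmall. rewrite Rminus_0_r, Rabs_pos_eq in hsmall by exact hu0.
    assert (htu : Rabs (t n) = u n * ((INR n - INR (p n)) / 2)) by (unfold u; field; lra).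
    split; [apply Rabs_pos|].
    eapply Rle_trans; [apply ln_Gamma_ratio_approx; nra|].
    change (Rabs (t n) / ((INR n - INR (p n)) / 2)) with (u n).
    apply Rmult_le_compat_l; [lra|]. apply Rmult_le_compat_l; [exact hu0 | lra].
  - apply is_lim_seq_const.
  - replace (Finite 0) with (Rbar_mult 2 (Rbar_mult 0 (4 * T + 5))) by (simpl; f_equal; ring).
    apply is_lim_seq_scal_l, is_lim_seq_scal_r, hu.
Qed.
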